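(* For every $n\ge1$, the unimodal spi-logic $\mathsf{SPi}+\{\Diamond^n p\to q\}$ is complex, and hence complete, where $\Diamond^n$ denotes $n$ consecutive diamonds and $p,q$ are distinct variables.
   Context: Unimodal setting: one diamond $\Diamond$. Sp-formulas: built from propositional variables and $\top$ by $\wedge$ and $\Diamond$; sp-implications $\sigma\to\tau$. A SLO is an algebra $(A,\wedge,\top,\Diamond)$ with $(A,\wedge,\top)$ a meet-semilattice with top and $\Diamond$ monotone; it validates $\sigma\to\tau$ if $\sigma[\mathfrak a]\le\tau[\mathfrak a]$ for all valuations. Frames $(W,R)$ with standard Kripke semantics. $\mathsf{SPi}+\Sigma$ is the set of sp-implications valid in every SLO validating $\Sigma$; it is complete if it equals the set of sp-implications valid in every frame validating $\Sigma$. For a frame $\mathfrak F=(W,R)$, $\mathfrak F^\star=(2^W,\cap,W,\Diamond^+)$ with $\Diamond^+X=\{w\mid\exists v\in X,(w,v)\in R\}$; a spi-logic $L$ is complex if every SLO validating $L$ embeds (injectively, preserving $\wedge,\top,\Diamond$) into $\mathfrak F^\star$ for some frame $\mathfrak F$ validating $L$. *)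

Inductive spform : Type :=
| SVar : nat -> spform
| STop : spform
| SAnd : spform -> spform -> spform
| SDia : spform -> spform.

Definition spimp : Type := (spform * spform)%type.

Definition spiset : Type := spimp -> Prop.

Fixpoint dian (n : nat) (f : spform) : spform :=
  match n with
  | O => f
  | S m => SDia (dian m f)
  end.

Record SLO : Type := {
  carrier :> Type;
  smeet : carrier -> carrier -> carrier;
  stop : carrier;
  sdia : carrier -> carrier;
  smeetA : forall a b c, smeet a (smeet b c) = smeet (smeet a b) c;
  smeetC : forall a b, smeet a b = smeet b a;
  smeetxx : forall a, smeet a a = a;
  smeet_top : forall a, smeet a stop = a;
  sdia_mono : forall a b, smeet a b = a -> smeet (sdia a) (sdia b) = sdia a
}.

Definition sle (A : SLO) (a b : A) : Prop := smeet A a b = a.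

Fixpoint seval (A : SLO) (v : nat -> A) (f : spform) : A :=
  match f with
  | SVar i => v i
  | STop => stop A
  | SAnd f g => smeet A (seval A v f) (seval A v g)
  | SDia f => sdia A (seval A v f)
  end.

Definition slo_valid (A : SLO) (i : spimp) : Prop :=
  forall v : nat -> A, sle A (seval A v (fst i)) (seval A v (snd i)).

Definition slo_validates (A : SLO) (S : spiset) : Prop :=
  forall i, S i -> slo_valid A i.

Definition SPi (Sigma : spiset) : spiset :=
  fun i => forall A : SLO, slo_validates A Sigma -> slo_valid A i.

Record frame : Type := {
  world :> Type;
  rel : world -> world -> Prop
}.

Fixpoint ksat (F : frame) (V : nat -> F -> Prop) (f : spform) (w : F) : Prop :=
  match f with
  | SVar i => V i w
  | STop => True
  | SAnd f g => ksat F V f w /\ ksat F V g w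
  | SDia f => exists u, rel F w u /\ ksat F V f u
  end.

Definition frame_valid (F : frame) (i : spimp) : Prop :=
  forall (V : nat -> F -> Prop) (w : F), ksat F V (fst i) w -> ksat F V (snd i) w.

Definition frame_validates (F : frame) (S : spiset) : Prop :=
  forall i, S i -> frame_valid F i.

Definition complete (Sigma : spiset) : Prop :=
  forall i, SPi Sigma i <-> (forall F : frame, frame_validates F Sigma -> frame_valid F i).

(** An embedding of the SLO A into the complex algebra F* = (2^W, cap, W, Dia^+).
    Subsets of W are predicates W -> Prop, compared extensionally. *)
Definition embeds_into_complex (A : SLO) (F : frame) : Prop :=
  exists h : A -> F -> Prop,
    (forall a b, (forall w, h a w <-> h b w) -> a = b) /\
    (forall a b w, h (smeet A a b) w <-> (h a w /\ h b w)) /\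
    (forall w, h (stop A) w <-> True) /\
    (forall a w, h (sdia A a) w <-> exists u, rel F w u /\ h a u).

Definition complex (L : spiset) : Prop :=
  forall A : SLO, slo_validates A L ->
    exists F : frame, frame_validates F L /\ embeds_into_complex A F.

(** Sigma_n = { Dia^n p -> q } with p = variable 0, q = variable 1. *)
Definition Sigma_dia_n (n : nat) : spiset :=
  fun i => i = (dian n (SVar 0), SVar 1).

From Stdlib Require Import PeanoNat Classical FunctionalExtensionality PropExtensionality.

(* If an SLO validates Dia^n p -> q, then every Dia^n a lies below every b, so
   all the Dia^n a coincide with a least element bot, and Dia bot = bot.  Such an
   SLO embeds into the complex algebra of the frame whose worlds are the elements
   other than bot, with w R u iff w <= Dia u, via a |-> {w | w <= a}; this frame
   has no R-path of length n, because such a path from w forces w <= Dia^n u = bot.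
   Completeness follows from complexity, since a frame validates an sp-implication
   exactly when its complex algebra does. *)

Section SemilatticeOrder.
Variable A : SLO.

Lemma sle_refl (a : A) : sle A a a.
Proof. apply smeetxx. Qed.

Lemma sle_trans (a b c : A) : sle A a b -> sle A b c -> sle A a c.
Proof. unfold sle; intros Hab Hbc. rewrite <- Hab, <- smeetA, Hbc. reflexivity. Qed.

Lemma sle_antisym (a b : A) : sle A a b -> sle A b a -> a = b.
Proof. unfold sle; intros Hab Hba. rewrite <- Hab, smeetC. exact Hba. Qed.

Lemma sle_meetl (a b : A) : sle A (smeet A a b) a.
Proof. unfold sle. rewrite <- smeetA, (smeetC A b a), smeetA, smeetxx. reflexivity. Qed.

Lemma sle_meetr (a b : A) : sle A (smeet A a b) b.
Proof. rewrite smeetC. apply sle_meetl. Qed.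

Lemma sle_meet (x a b : A) : sle A x (smeet A a b) <-> sle A x a /\ sle A x b.
Proof.
  split.
  - intros Hx; split; eapply sle_trans; eauto using sle_meetl, sle_meetr.
  - unfold sle; intros [Ha Hb]. rewrite smeetA, Ha, Hb. reflexivity.
Qed.

Lemma sle_top (a : A) : sle A a (stop A).
Proof. apply smeet_top. Qed.

Lemma seval_dian (v : nat -> A) n f :
  seval A v (dian n f) = Nat.iter n (sdia A) (seval A v f).
Proof. induction n as [|n IHn]; simpl; congruence. Qed.

End SemilatticeOrder.

Section NonbottomFrame.
Variables (A : SLO) (bot : A).

Definition nonbottom_frame : frame :=
  {| world := {a : A | a <> bot};
     rel := fun w u => sle A (proj1_sig w) (sdia A (proj1_sig u)) |}.

Lemma ksat_dian_nonbottom_frame V n f (w : nonbottom_frame) :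
  ksat nonbottom_frame V (dian n f) w ->
  exists u : A, sle A (proj1_sig w) (Nat.iter n (sdia A) u).
Proof.
  revert w; induction n as [|n IHn]; intros w Hw.
  - exists (proj1_sig w). apply sle_refl.
  - destruct Hw as [u [Hwu Hu]]. destruct (IHn u Hu) as [x Hx].
    exists x. eapply sle_trans; [exact Hwu|]. apply sdia_mono, Hx.
Qed.

Hypothesis bot_least : forall a, sle A bot a.
Hypothesis sdia_bot : sdia A bot = bot.

Lemma sle_bot (a : A) : sle A a bot -> a = bot.
Proof. intros Ha. apply sle_antisym; auto. Qed.

Lemma embeds_into_nonbottom_frame : embeds_into_complex A nonbottom_frame.
Proof.
  exists (fun a w => sle A (proj1_sig w) a); simpl.
  split; [|split; [|split]].
  - assert (Hself : forall a, a <> bot -> exists w : nonbottom_frame, proj1_sig w = a)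
      by (intros a Ha; exists (exist _ a Ha); reflexivity).
    intros a b Hab. apply sle_antisym.
    + destruct (classic (a = bot)) as [->|Ha]; auto.
      destruct (Hself a Ha) as [w <-]. apply Hab, sle_refl.
    + destruct (classic (b = bot)) as [->|Hb]; auto.
      destruct (Hself b Hb) as [w <-]. apply Hab, sle_refl.
  - intros a b w. apply sle_meet.
  - intros w. split; auto using sle_top.
  - intros a w. split.
    + intros Hwa. assert (Ha : a <> bot).
      { intros ->. rewrite sdia_bot in Hwa. apply (proj2_sig w), sle_bot, Hwa. }
      exists (exist _ a Ha). split; [exact Hwa | apply sle_refl].
    + intros [u [Hwu Hua]]. eapply sle_trans; [exact Hwu|]. apply sdia_mono, Hua.
Qed.

End NonbottomFrame.

Section ComplexAlgebra.
Variable F : frame.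

Lemma pred_ext (X Y : F -> Prop) : (forall w, X w <-> Y w) -> X = Y.
Proof.
  intros HXY. apply functional_extensionality. intros w.
  apply propositional_extensionality, HXY.
Qed.

Definition pmeet (X Y : F -> Prop) (w : F) : Prop := X w /\ Y w.

Definition pdia (X : F -> Prop) (w : F) : Prop := exists u, rel F w u /\ X u.

Lemma pmeet_id_iff (X Y : F -> Prop) : pmeet X Y = X <-> (forall w, X w -> Y w).
Proof.
  split.
  - intros HXY w Hw. rewrite <- HXY in Hw. apply Hw.
  - intros HXY. apply pred_ext. unfold pmeet; firstorder.
Qed.

Lemma pdia_mono (X Y : F -> Prop) : pmeet X Y = X -> pmeet (pdia X) (pdia Y) = pdia X.
Proof. rewrite !pmeet_id_iff. unfold pdia; firstorder. Qed.

Definition complex_algebra : SLO.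
Proof.
  refine {| carrier := F -> Prop; smeet := pmeet; stop := fun _ => True;
            sdia := pdia; sdia_mono := pdia_mono |};
  intros; apply pred_ext; unfold pmeet; tauto.
Defined.

Lemma seval_complex_algebra V f : seval complex_algebra V f = ksat F V f.
Proof. induction f; simpl; try rewrite IHf; try rewrite IHf1, IHf2; reflexivity. Qed.

Lemma slo_valid_complex_algebra i : slo_valid complex_algebra i <-> frame_valid F i.
Proof.
  unfold slo_valid, frame_valid, sle; simpl.
  split; intros Hi V; [specialize (Hi V)|];
    rewrite pmeet_id_iff, !seval_complex_algebra in *; auto.
Qed.

Lemma slo_validates_complex_algebra S :
  slo_validates complex_algebra S <-> frame_validates F S.
Proof.
  unfold slo_validates, frame_validates.
  split; intros HS i Hi; apply slo_valid_complex_algebra; auto.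
Qed.

End ComplexAlgebra.

Lemma embeds_slo_valid A F i : embeds_into_complex A F -> frame_valid F i -> slo_valid A i.
Proof.
  intros [h [h_inj [h_meet [h_top h_dia]]]] HF v.
  assert (Hseval : forall f w, h (seval A v f) w <-> ksat F (fun k => h (v k)) f w).
  { induction f; intros w; simpl.
    - reflexivity.
    - apply h_top.
    - rewrite h_meet, IHf1, IHf2. reflexivity.
    - rewrite h_dia. split; intros [u [Hwu Hu]]; exists u; split; auto; apply IHf, Hu. }
  apply h_inj. intros w. rewrite h_meet.
  split; [tauto|]. intros Hw; split; auto. apply Hseval, HF, Hseval, Hw.
Qed.

Lemma slo_validates_SPi A S : slo_validates A (SPi S) <-> slo_validates A S.
Proof.
  split; intros HA i Hi.
  - apply HA. intros B HB. apply HB, Hi.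
  - apply Hi, HA.
Qed.

Lemma frame_validates_SPi F S : frame_validates F (SPi S) <-> frame_validates F S.
Proof. rewrite <- !slo_validates_complex_algebra. apply slo_validates_SPi. Qed.

Lemma complex_SPi S :
  (forall A, slo_validates A S -> exists F, frame_validates F S /\ embeds_into_complex A F) ->
  complex (SPi S).
Proof.
  intros HS A HA. rewrite slo_validates_SPi in HA.
  destruct (HS A HA) as [F [HF HAF]].
  exists F. rewrite frame_validates_SPi. auto.
Qed.

Lemma complete_of_complex S : complex (SPi S) -> complete S.
Proof.
  intros HS i. split.
  - intros Hi F HF. apply slo_valid_complex_algebra, Hi, slo_validates_complex_algebra, HF.
  - intros Hi A HA. rewrite <- slo_validates_SPi in HA.
    destruct (HS A HA) as [F [HF HAF]]. rewrite frame_validates_SPi in HF.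
    apply (embeds_slo_valid A F); auto.
Qed.

Section SigmaDiaN.
Variables (n : nat) (A : SLO).
Hypothesis HA : slo_validates A (Sigma_dia_n n).

Lemma sle_iter_sdia (a b : A) : sle A (Nat.iter n (sdia A) a) b.
Proof.
  pose (v := fun i => match i with O => a | _ => b end).
  specialize (HA _ eq_refl v). simpl in HA. rewrite seval_dian in HA. exact HA.
Qed.

Let bot : A := Nat.iter n (sdia A) (stop A).

Lemma iter_sdia_bot (a : A) : Nat.iter n (sdia A) a = bot.
Proof. apply sle_antisym; apply sle_iter_sdia. Qed.

Lemma sdia_bot : sdia A bot = bot.
Proof. unfold bot. rewrite <- Nat.iter_succ, Nat.iter_succ_r. apply iter_sdia_bot. Qed.

Lemma nonbottom_frame_validates : frame_validates (nonbottom_frame A bot) (Sigma_dia_n n).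
Proof.
  intros i -> V w Hw. exfalso.
  destruct (ksat_dian_nonbottom_frame A bot V n _ w Hw) as [u Hu].
  rewrite iter_sdia_bot in Hu. apply (proj2_sig w), (sle_bot A bot (sle_iter_sdia _)), Hu.
Qed.

End SigmaDiaN.

Lemma complex_Sigma_dia_n n : complex (SPi (Sigma_dia_n n)).
Proof.
  apply complex_SPi. intros A HA.
  exists (nonbottom_frame A (Nat.iter n (sdia A) (stop A))). split.
  - apply nonbottom_frame_validates, HA.
  - apply embeds_into_nonbottom_frame.
    + apply sle_iter_sdia, HA.
    + apply sdia_bot, HA.
Qed.

Theorem theorem5p24 (n : nat) :
  1 <= n -> complex (SPi (Sigma_dia_n n)) /\ complete (Sigma_dia_n n).
Proof.
  intros _. split.
  - apply complex_Sigma_dia_n.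
  - apply complete_of_complex, complex_Sigma_dia_n.
Qed.
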